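(* Let $K$ be a simplicial complex on the vertex set $[m]$. If $K_{I\cup J}=\partial\Delta^I*\partial\Delta^J$ for some non-empty $I,J\subset[m]$ with $I\cap J=\emptyset$, then $K$ is not Golod, i.e. $\Bbbk[K]$ is not Golod for any commutative ring $\Bbbk$.
   Context: $K_S=\{\sigma\in K\mid\sigma\subset S\}$ is the full subcomplex on $S$; $\Delta^S$ is the full simplex on a finite set $S$, $\partial\Delta^S$ its boundary (all proper subsets of $S$), and $*$ is the join. The Stanley–Reisner ring is $\Bbbk[K]=\Bbbk[v_1,\ldots,v_m]/(v_I\mid I\notin K)$, $|v_i|=2$, $v_I=\prod_{i\in I}v_i$; it is Golod if all products and (higher) Massey products in the positive-degree part of $\mathrm{Tor}_{\Bbbk[v_1,\ldots,v_m]}(\Bbbk[K],\Bbbk)$ are trivial, with these operations induced from the Koszul resolution of $\Bbbk$ tensored with $\Bbbk[K]$. *)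

From HB Require Import structures.
From mathcomp Require Import all_boot all_order all_algebra.
From mathcomp Require Import mpoly.
Set Implicit Arguments. Unset Strict Implicit. Unset Printing Implicit Defensive.
Import Order.TTheory GRing.Theory.
Local Open Scope ring_scope.

(* A simplicial complex on [m]: a family of subsets of [m] closed under
   taking subsets (ghost vertices allowed, as usual). *)
Definition simplicial_complex (m : nat) (K : {set {set 'I_m}}) : Prop :=
  forall s t : {set 'I_m}, t \subset s -> s \in K -> t \in K.

Definition full_sub (m : nat) (K : {set {set 'I_m}}) (S : {set 'I_m}) :
  {set {set 'I_m}} := [set s in K | s \subset S].

Definition bdry_simplex (m : nat) (S : {set 'I_m}) : {set {set 'I_m}} :=
  [set s : {set 'I_m} | s \proper S].

Definition sc_join (m : nat) (K1 K2 : {set {set 'I_m}}) : {set {set 'I_m}} :=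
  [set s :|: t | s in K1, t in K2].

(* An element is a finite function J |-> p_J, meaning  sum_J u_J * p_J,
   where u_J = u_{j1} ... u_{jr} (j1 < ... < jr) and p_J is a polynomial in
   v_1..v_m.  Elements of k[K] are represented by their unique "reduced"
   representatives: polynomials all of whose monomials have support a face
   of K (the Stanley-Reisner ideal is spanned by the other monomials). *)

Section Koszul.
Variables (m : nat) (k : comNzRingType) (K : {set {set 'I_m}}).

Definition KT := {ffun {set 'I_m} -> {mpoly k[m]}}.

Definition mono_supp (mo : 'X_{1..m}) : {set 'I_m} := [set i | mo i != 0%N].

Definition red_poly (p : {mpoly k[m]}) : {mpoly k[m]} :=
  \sum_(mo <- msupp p | mono_supp mo \in K) p@_mo *: 'X_[mo].

Definition kred (x : KT) : KT := [ffun J : {set 'I_m} => red_poly (x J)].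

Definition kreduced (x : KT) : Prop := kred x = x.

(* u_{J1} u_{J2} = ksgn J1 J2 * u_{J1 :|: J2} for disjoint J1, J2 *)
Definition ksgn (J1 J2 : {set 'I_m}) : k :=
  (-1) ^+ #|[set ab : 'I_m * 'I_m | [&& ab.1 \in J1, ab.2 \in J2 & (ab.2 < ab.1)%N]]|.

Definition kmul (x y : KT) : KT :=
  kred [ffun J : {set 'I_m} => \sum_(J1 : {set 'I_m}) \sum_(J2 : {set 'I_m} |
            [disjoint J1 & J2] && (J1 :|: J2 == J)) ksgn J1 J2 *: (x J1 * y J2)].

(* Koszul differential: d u_i = v_i, d v_i = 0, graded Leibniz rule *)
Definition kd (x : KT) : KT :=
  kred [ffun L : {set 'I_m} => \sum_(j : 'I_m | j \notin L)
            ((-1) ^+ #|[set i in L | (i < j)%N]|) *: ('X_j * x (j |: L))].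

(* total degree: deg u_i = 1 (bidegree (-1,2)), deg v_i = 2 (bidegree (0,2)) *)
Definition khomog (n : nat) (x : KT) : Prop :=
  forall (J : {set 'I_m}) (mo : 'X_{1..m}), mo \in msupp (x J) ->
    (#|J| + 2 * mdeg mo)%N = n.

(* \bar x = (-1)^{1 + deg x} x, extended additively (parity of deg = #|J|) *)
Definition kbar (x : KT) : KT := [ffun J : {set 'I_m} => ((-1) ^+ (#|J|.+1)) *: x J].

Definition kboundary (x : KT) : Prop := exists y : KT, kreduced y /\ x = kd y.

(* Degree of the entry a_{ij} of a defining system (0-based indices). *)
Definition dsdeg (deg : nat -> nat) (i j : nat) : nat :=
  ((\sum_(i <= l < j.+1) deg l) - (j - i))%N.

(* a : nat -> nat -> KT is a defining system (May's convention, 0-based)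
   for the n-fold Massey product of the classes of the cycles a i i
   (i < n), homogeneous of positive degrees deg i. *)
Definition defining_system (n : nat) (deg : nat -> nat) (a : nat -> nat -> KT) : Prop :=
  (forall i, (i < n)%N -> (0 < deg i)%N /\ kd (a i i) = 0) /\
  (forall i j, (i <= j)%N -> (j < n)%N -> (i, j) <> (0%N, n.-1) ->
     [/\ kreduced (a i j), khomog (dsdeg deg i j) (a i j) &
         ((i < j)%N -> kd (a i j) = \sum_(i <= l < j) kmul (kbar (a i l)) (a l.+1 j))]).

Definition massey_value (n : nat) (a : nat -> nat -> KT) : KT :=
  \sum_(0 <= l < n.-1) kmul (kbar (a 0%N l)) (a l.+1 n.-1).

(* k[K] is Golod: every product and higher Massey product <a_1,...,a_n>
   (n >= 2) of positive-degree classes in Tor(k[K],k) = H(Koszul dga) is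
   trivial, i.e. whenever it is defined it contains 0. *)
Definition golod : Prop :=
  forall (n : nat) (deg : nat -> nat) (a : nat -> nat -> KT),
    (2 <= n)%N -> defining_system n deg a ->
    exists b : nat -> nat -> KT,
      [/\ defining_system n deg b,
          (forall i, (i < n)%N -> kboundary (b i i - a i i)) &
          kboundary (massey_value n b)].

End Koszul.

From HB Require Import structures.
From mathcomp Require Import all_boot all_order all_algebra.
From mathcomp Require Import mpoly.
Set Implicit Arguments. Unset Strict Implicit. Unset Printing Implicit Defensive.
Import Order.TTheory GRing.Theory.
Local Open Scope ring_scope.

(* Pick i0 in I and j0 in J.  As I and J are not faces while their proper
   subsets are, x_I = u_i0 v_(I - i0) and x_J = u_j0 v_(J - j0) are cycles of
   the Koszul complex.  Let phi be the signed sum, over i in I and j in J, of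
   the coefficients of u_i u_j v_(I + J - i - j), a monomial that survives in
   k[K].  The differential reaches it only from terms u_i u_j u_t v_(...),
   each of which also reaches the monomial indexed by (t, j) or (i, t), with
   the opposite sign; so phi vanishes on boundaries.  As phi (x_I x_J) = 1,
   the product of the classes of x_I and x_J, a 2-fold Massey product, does
   not contain 0. *)

Lemma sum_if_eq (V : nmodType) (T : finType) (P : pred T) (B : T) (F : T -> V) :
  \sum_(x | P x) (if x == B then F x else 0) = if P B then F B else 0.
Proof.
rewrite -big_mkcondr; case: ifP => PB.
  rewrite (eq_bigl (pred1 B)) ?big_pred1_eq // => x /=.
  by case: eqP => [->|]; rewrite ?andbT ?andbF.
by rewrite big_pred0 // => x; case: eqP => [->|]; rewrite ?andbT ?andbF.
Qed.

Lemma signr_eq_odd (R : pzRingType) a b : odd a = odd b -> (-1) ^+ a = (-1) ^+ b :> R.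
Proof. by move=> h; rewrite -signr_odd h signr_odd. Qed.

Lemma signr_eq_oddN (R : pzRingType) a b :
  odd a = ~~ odd b -> (-1) ^+ a = - (-1) ^+ b :> R.
Proof. by move=> h; rewrite (@signr_eq_odd _ a b.+1) ?exprS ?mulN1r // /= h. Qed.

Ltac odd_cases := repeat match goal with |- context[odd ?n] => case: (odd n) end.

Lemma sum_antisym_eq0 (V : zmodType) n (S : {set 'I_n}) (G : 'I_n -> 'I_n -> V) :
  (forall a b, a \in S -> b \in S -> a != b -> G a b = - G b a) ->
  \sum_(a in S) \sum_(b in S :\ a) G a b = 0.
Proof.
move=> G_anti.
pose H a b := if [&& a \in S, b \in S & a != b] then G a b else 0.
have HN a b : H a b = - H b a.
  rewrite /H; case: (boolP (a \in S)) => aS; case: (boolP (b \in S)) => bS /=;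
    rewrite ?oppr0 //; case: eqP => [->|/eqP ne]; rewrite ?eqxx ?oppr0 //=.
  by rewrite eq_sym ne G_anti.
have -> : \sum_(a in S) \sum_(b in S :\ a) G a b = \sum_a \sum_b H a b.
  rewrite big_mkcond /=; apply: eq_bigr => a _.
  case: (boolP (a \in S)) => aS; last by rewrite big1 // => b _; rewrite /H (negbTE aS).
  by rewrite big_mkcond /=; apply: eq_bigr => b _; rewrite /H !inE aS /= eq_sym andbC.
have split_lt a : \sum_(b : 'I_n) H a b =
    \sum_(b : 'I_n) (if (b < a)%N then H a b else 0) +
    \sum_(b : 'I_n) (if (a < b)%N then H a b else 0).
  rewrite -big_split /=; apply: eq_bigr => b _.
  case: (ltngtP b a) => [||/val_inj ->]; rewrite ?addr0 ?add0r //.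
  by have := HN a a; rewrite /H eqxx /= !andbF.
under eq_bigr do rewrite split_lt.
rewrite big_split /= [X in _ + X]exchange_big /= -[X in _ + X]opprK -sumrN.
apply/eqP; rewrite subr_eq0; apply/eqP; apply: eq_bigr => a _.
rewrite -sumrN; apply: eq_bigr => b _.
by case: ifP => _; rewrite ?oppr0 // HN opprK.
Qed.

Section KoszulPolynomial.
Variables (m : nat) (k : comNzRingType).
Local Notation KT := (KT m k).
Implicit Types (i j : 'I_m) (x y : KT) (A B C L : {set 'I_m}) (p q r : {mpoly k[m]}).

Definition ninv A B :=
  #|[set ab : 'I_m * 'I_m | [&& ab.1 \in A, ab.2 \in B & (ab.2 < ab.1)%N]]|.

Lemma ksgnE A B : ksgn k A B = (-1) ^+ ninv A B.
Proof. by []. Qed.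

Lemma ninvUl A A' B : [disjoint A & A'] -> ninv (A :|: A') B = (ninv A B + ninv A' B)%N.
Proof.
move=> dA; rewrite /ninv -cardsUI.
have -> : [set ab : 'I_m * 'I_m | [&& ab.1 \in A, ab.2 \in B & (ab.2 < ab.1)%N]] :&:
  [set ab : 'I_m * 'I_m | [&& ab.1 \in A', ab.2 \in B & (ab.2 < ab.1)%N]] = set0.
  apply/setP => ab; rewrite !inE; apply/negbTE/negP.
  by case/andP=> /and3P [h1 _ _] /and3P [h2 _ _]; rewrite (disjointFr dA h1) in h2.
by rewrite cards0 addn0; apply: eq_card => ab; rewrite !inE andb_orl.
Qed.

Lemma ninvUr A B B' : [disjoint B & B'] -> ninv A (B :|: B') = (ninv A B + ninv A B')%N.
Proof.
move=> dB; rewrite /ninv -cardsUI.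
have -> : [set ab : 'I_m * 'I_m | [&& ab.1 \in A, ab.2 \in B & (ab.2 < ab.1)%N]] :&:
  [set ab : 'I_m * 'I_m | [&& ab.1 \in A, ab.2 \in B' & (ab.2 < ab.1)%N]] = set0.
  apply/setP => ab; rewrite !inE; apply/negbTE/negP.
  by case/andP=> /and3P [_ h1 _] /and3P [_ h2 _]; rewrite (disjointFr dB h1) in h2.
rewrite cards0 addn0; apply: eq_card => ab; rewrite !inE.
by case: (_ \in A); rewrite /= ?andb_orl.
Qed.

Lemma ninv1l j A : ninv [set j] A = #|[set i in A | (i < j)%N]|.
Proof.
have inj : injective (@pair 'I_m 'I_m j) by move=> b b' [->].
rewrite /ninv -(card_imset _ inj); apply: eq_card => [[a b]]; rewrite !inE /=.
apply/and3P/imsetP => [[/eqP -> hb hl]|[b']]; first by exists b; rewrite // inE hb.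
by rewrite inE => /andP [h1 h2] [-> ->]; split.
Qed.

Lemma ninv1r j A : ninv A [set j] = #|[set i in A | (j < i)%N]|.
Proof.
have inj : injective (fun a : 'I_m => (a, j)) by move=> b b' [->].
rewrite /ninv -(card_imset _ inj); apply: eq_card => [[a b]]; rewrite !inE /=.
apply/and3P/imsetP => [[ha /eqP -> hl]|[a']]; first by exists a; rewrite // inE ha.
by rewrite inE => /andP [h1 h2] [-> ->]; split.
Qed.

Lemma ninv1lr j A : j \notin A -> (ninv [set j] A + ninv A [set j])%N = #|A|.
Proof.
move=> jA; rewrite ninv1l ninv1r -cardsUI.
have -> : [set i in A | (i < j)%N] :&: [set i in A | (j < i)%N] = set0.
  apply/setP => i; rewrite !inE; apply/negbTE/negP.
  by case/andP=> /andP [_ h1] /andP [_ h2]; move: (ltn_trans h1 h2); rewrite ltnn.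
rewrite cards0 addn0; apply: eq_card => i; rewrite !inE.
case iA: (i \in A) => //=; case: (ltngtP i j) => //= /val_inj e.
by move: jA; rewrite -e iA.
Qed.

(* The sign of moving [u_j] to the front of the ordered product [u_(A + j)]. *)
Definition dsgn A j : k := (-1) ^+ #|[set i in A | (i < j)%N]|.

Lemma dsgnE A j : dsgn A j = (-1) ^+ ninv [set j] A.
Proof. by rewrite ninv1l. Qed.

Lemma ksgn_dsgnl A B j : j \in A -> [disjoint A & B] ->
  ksgn k A B * dsgn ((A :\ j) :|: B) j = dsgn (A :\ j) j * ksgn k (A :\ j) B.
Proof.
move=> jA dAB.
have dA'B : [disjoint A :\ j & B] by apply: disjointWl dAB; apply: subsetDl.
have djA : [disjoint [set j] & A :\ j] by rewrite disjoints1 setD11.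
rewrite -{1}(setD1K jA) !ksgnE !dsgnE (ninvUl _ djA) ninvUr //.
by rewrite -!exprD; apply: signr_eq_odd; rewrite !oddD; odd_cases.
Qed.

Lemma ksgn_dsgnr A B j : j \in B -> [disjoint A & B] ->
  ksgn k A B * dsgn (A :|: (B :\ j)) j = (-1) ^+ #|A| * (dsgn (B :\ j) j * ksgn k A (B :\ j)).
Proof.
move=> jB dAB.
have dAB' : [disjoint A & B :\ j] by apply: disjointWr dAB; apply: subsetDl.
have jA : j \notin A by rewrite (disjointFl dAB jB).
have djB : [disjoint [set j] & B :\ j] by rewrite disjoints1 setD11.
rewrite -{1}(setD1K jB) !ksgnE !dsgnE (ninvUr _ djB) ninvUr //.
by rewrite -(ninv1lr jA) -!exprD; apply: signr_eq_odd; rewrite !oddD; odd_cases.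
Qed.

Lemma dsgn_ksgn_cancel A B j : j \in A -> j \in B -> [disjoint A :\ j & B] ->
  dsgn (A :\ j) j * ksgn k (A :\ j) B +
  (-1) ^+ #|A| * (dsgn (B :\ j) j * ksgn k A (B :\ j)) = 0.
Proof.
move=> jA jB d.
have d' : [disjoint A :\ j & B :\ j] by apply: disjointWr d; apply: subsetDl.
have -> : ksgn k (A :\ j) B = ksgn k (A :\ j) ([set j] :|: B :\ j) by rewrite setD1K.
have -> : ksgn k A (B :\ j) = ksgn k ([set j] :|: A :\ j) (B :\ j) by rewrite setD1K.
rewrite (cardsD1 j A) jA -(@ninv1lr j (A :\ j)) ?setD11 //.
have djA : [disjoint [set j] & A :\ j] by rewrite disjoints1 setD11.
have djB : [disjoint [set j] & B :\ j] by rewrite disjoints1 setD11.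
rewrite !ksgnE !dsgnE (ninvUr _ djB) (ninvUl _ djA).
rewrite -!exprD; apply/eqP; rewrite addr_eq0; apply/eqP/signr_eq_oddN.
by rewrite !oddD /=; odd_cases.
Qed.

Definition kterm A p : KT := [ffun L : {set 'I_m} => if L == A then p else 0].

Fact kterm_is_linear A : linear (kterm A).
Proof. by move=> c p q; apply/ffunP => L; rewrite !ffunE; case: ifP; rewrite ?scaler0 ?addr0. Qed.
HB.instance Definition _ A :=
  GRing.isLinear.Build k {mpoly k[m]} KT _ (kterm A) (kterm_is_linear A).

Lemma kterm_sum x : x = \sum_A kterm A (x A).
Proof.
apply/ffunP => L; rewrite sum_ffunE (bigD1 L) //= ffunE eqxx big1 ?addr0 //.
by move=> A /negbTE nA; rewrite ffunE eq_sym nA.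
Qed.

Definition kpar x : KT := [ffun J : {set 'I_m} => (-1) ^+ #|J| *: x J].

Fact kpar_is_linear : linear kpar.
Proof. by move=> c x y; apply/ffunP => J; rewrite !ffunE scalerDr !scalerA mulrC. Qed.
HB.instance Definition _ := GRing.isLinear.Build k KT KT _ kpar kpar_is_linear.

Fact kbar_is_linear : linear (@kbar m k).
Proof. by move=> c x y; apply/ffunP => J; rewrite !ffunE scalerDr !scalerA mulrC. Qed.
HB.instance Definition _ := GRing.isLinear.Build k KT KT _ (@kbar m k) kbar_is_linear.

Lemma kbarE x : kbar x = - kpar x.
Proof. by apply/ffunP => J; rewrite !ffunE exprS mulN1r scaleNr. Qed.

Lemma kpar_kterm A p : kpar (kterm A p) = (-1) ^+ #|A| *: kterm A p.
Proof. by apply/ffunP => L; rewrite !ffunE; case: eqP => [->|_]; rewrite ?scaler0. Qed.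

Definition pkd x : KT :=
  [ffun L : {set 'I_m} => \sum_(j | j \notin L) dsgn L j *: ('X_j * x (j |: L))].

Definition pkmul x y : KT := [ffun J : {set 'I_m} => \sum_(J1 : {set 'I_m}) \sum_(J2 : {set 'I_m} |
  [disjoint J1 & J2] && (J1 :|: J2 == J)) ksgn k J1 J2 *: (x J1 * y J2)].

Definition pkmulr y x := pkmul x y.

Fact pkd_is_linear : linear pkd.
Proof.
move=> c x y; apply/ffunP => L; rewrite !ffunE scaler_sumr -big_split /=.
by apply: eq_bigr => j _; rewrite !ffunE mulrDr -scalerAr !scalerDr !scalerA mulrC.
Qed.
HB.instance Definition _ := GRing.isLinear.Build k KT KT _ pkd pkd_is_linear.

Fact pkmul_is_linear x : linear (pkmul x).
Proof.
move=> c y z; apply/ffunP => L; rewrite !ffunE scaler_sumr -big_split /=.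
apply: eq_bigr => J1 _; rewrite scaler_sumr -big_split /=; apply: eq_bigr => J2 _.
by rewrite !ffunE mulrDr -scalerAr !scalerDr !scalerA mulrC.
Qed.
HB.instance Definition _ x :=
  GRing.isLinear.Build k KT KT _ (pkmul x) (pkmul_is_linear x).

Fact pkmulr_is_linear y : linear (pkmulr y).
Proof.
move=> c x z; apply/ffunP => L; rewrite !ffunE scaler_sumr -big_split /=.
apply: eq_bigr => J1 _; rewrite scaler_sumr -big_split /=; apply: eq_bigr => J2 _.
by rewrite !ffunE mulrDl -scalerAl !scalerDr !scalerA mulrC.
Qed.
HB.instance Definition _ y :=
  GRing.isLinear.Build k KT KT _ (pkmulr y) (pkmulr_is_linear y).

Lemma pkmulDl x y z : pkmul (x + y) z = pkmul x z + pkmul y z.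
Proof. by rewrite -[LHS]/(pkmulr z (x + y)) linearD. Qed.

Lemma pkmulZl c x y : pkmul (c *: x) y = c *: pkmul x y.
Proof. by rewrite -[LHS]/(pkmulr y (c *: x)) linearZ. Qed.

Lemma pkmulZr c x y : pkmul x (c *: y) = c *: pkmul x y.
Proof. exact: linearZ. Qed.

Lemma pkmul_suml (I : Type) (r : seq I) (P : pred I) (F : I -> KT) y :
  pkmul (\sum_(i <- r | P i) F i) y = \sum_(i <- r | P i) pkmul (F i) y.
Proof. by rewrite -[LHS]/(pkmulr y _) linear_sum. Qed.

Lemma pkmul_sumr (I : Type) (r : seq I) (P : pred I) (F : I -> KT) x :
  pkmul x (\sum_(i <- r | P i) F i) = \sum_(i <- r | P i) pkmul x (F i).
Proof. exact: linear_sum. Qed.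

Lemma pkd_sum (I : Type) (r : seq I) (P : pred I) (F : I -> KT) :
  pkd (\sum_(i <- r | P i) F i) = \sum_(i <- r | P i) pkd (F i).
Proof. exact: linear_sum. Qed.

Lemma kpar_sum (I : Type) (r : seq I) (P : pred I) (F : I -> KT) :
  kpar (\sum_(i <- r | P i) F i) = \sum_(i <- r | P i) kpar (F i).
Proof. exact: linear_sum. Qed.

Lemma pkmul_kterm A B p q : pkmul (kterm A p) (kterm B q) =
  if [disjoint A & B] then ksgn k A B *: kterm (A :|: B) (p * q) else 0.
Proof.
apply/ffunP => J; rewrite !ffunE (bigD1 A) //= [X in _ + X]big1 ?addr0; last first.
  by move=> J1 /negbTE nJ1; rewrite big1 // => J2 _; rewrite !ffunE nJ1 mul0r scaler0.
rewrite (eq_bigr (fun J2 => if J2 == B then ksgn k A J2 *: (p * q) else 0)); last first.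
  by move=> J2 _; rewrite !ffunE eqxx; case: (J2 == B); rewrite ?mulr0 ?scaler0.
rewrite sum_if_eq; case: [disjoint A & B]; rewrite /= ?ffunE // eq_sym.
by case: (J == A :|: B); rewrite ?scaler0.
Qed.

Lemma pkd_kterm C r :
  pkd (kterm C r) = \sum_(j in C) dsgn (C :\ j) j *: kterm (C :\ j) ('X_j * r).
Proof.
apply/ffunP => L; rewrite !ffunE sum_ffunE big_mkcond [RHS]big_mkcond /=.
apply: eq_bigr => j _; rewrite !ffunE.
case jL: (j \in L) => /=.
  case: (j \in C) => //; case: eqP => [eL|_]; rewrite ?scaler0 //.
  by move: jL; rewrite eL setD11.
case: eqP => [<-|ne]; first by rewrite setU11 setU1K ?jL // eqxx.
case jC: (j \in C); rewrite ?mulr0 ?scaler0 //; case: eqP => [eL|_]; rewrite ?scaler0 //.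
by case: ne; rewrite eL setD1K.
Qed.

Lemma pkd_pkmul_kterm_disjoint A B p q : [disjoint A & B] ->
  pkd (pkmul (kterm A p) (kterm B q)) =
  pkmul (pkd (kterm A p)) (kterm B q) + pkmul (kpar (kterm A p)) (pkd (kterm B q)).
Proof.
move=> dAB; rewrite kpar_kterm !pkd_kterm pkmul_kterm dAB linearZ /= pkd_kterm.
rewrite pkmul_suml pkmulZl pkmul_sumr !scaler_sumr.
rewrite (eq_bigl [predU A & B]) => [|j]; last by rewrite !inE.
rewrite bigU //; congr (_ + _); apply: eq_bigr => j jX.
- have jB : j \notin B by rewrite (disjointFr dAB jX).
  have dA'B : [disjoint A :\ j & B] by apply: disjointWl dAB; apply: subsetDl.
  rewrite setDUl.
  have -> : B :\ j = B by apply/setDidPl; rewrite disjoint_sym disjoints1.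
  by rewrite pkmulZl pkmul_kterm dA'B !scalerA ksgn_dsgnl // mulrA.
- have jA : j \notin A by rewrite (disjointFl dAB jX).
  have dAB' : [disjoint A & B :\ j] by apply: disjointWr dAB; apply: subsetDl.
  rewrite setDUl.
  have -> : A :\ j = A by apply/setDidPl; rewrite disjoint_sym disjoints1.
  rewrite pkmulZr pkmul_kterm dAB' mulrCA !scalerA.
  by rewrite ksgn_dsgnr // !mulrA.
Qed.

Lemma pkd_pkmul_kterm_meet A B p q : ~~ [disjoint A & B] ->
  pkmul (pkd (kterm A p)) (kterm B q) + pkmul (kpar (kterm A p)) (pkd (kterm B q)) = 0.
Proof.
rewrite -setI_eq0 => /set0Pn [j0]; rewrite inE => /andP [j0A j0B].
have disjF (j : 'I_m) (C D : {set 'I_m}) : j \in C -> j \in D -> [disjoint C & D] = false.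
  by move=> jC jD; apply/negbTE/negP => dCD; rewrite (disjointFr dCD jC) in jD.
rewrite kpar_kterm !pkd_kterm pkmul_suml pkmulZl pkmul_sumr scaler_sumr.
rewrite (bigD1 j0) //= big1 ?addr0 => [|j /andP [jA ne]]; last first.
  by rewrite pkmulZl pkmul_kterm (@disjF j0) ?scaler0 // !inE eq_sym ne.
rewrite (bigD1 j0) //= big1 ?addr0 => [|j /andP [jB ne]]; last first.
  by rewrite pkmulZr pkmul_kterm (@disjF j0) ?scaler0 // !inE eq_sym ne.
rewrite pkmulZl pkmulZr !pkmul_kterm.
have -> : [disjoint A & B :\ j0] = [disjoint A :\ j0 & B].
  by rewrite -!setI_eq0 setIDA setIDAC.
case: (boolP [disjoint A :\ j0 & B]) => d; last by rewrite !scaler0 addr0.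
have -> : A :|: B :\ j0 = A :\ j0 :|: B.
  by apply/setP => x; rewrite !inE; case: (eqVneq x j0) => [->|]; rewrite ?j0A ?j0B.
rewrite mulrCA mulrA !scalerA -scalerDl -[(-1) ^+ #|A| * _ * _]mulrA.
by rewrite dsgn_ksgn_cancel // scale0r.
Qed.

Lemma pkd_pkmul x y : pkd (pkmul x y) = pkmul (pkd x) y + pkmul (kpar x) (pkd y).
Proof.
rewrite [x]kterm_sum [y]kterm_sum pkmul_suml !pkd_sum kpar_sum !pkmul_suml -big_split /=.
apply: eq_bigr => A _; rewrite pkmul_sumr !pkd_sum !pkmul_sumr -big_split /=.
apply: eq_bigr => B _; case: (boolP [disjoint A & B]) => dAB.
  exact: pkd_pkmul_kterm_disjoint.
by rewrite pkd_pkmul_kterm_meet // pkmul_kterm (negbTE dAB) linear0.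
Qed.

Lemma pkd_kpar x : pkd (kpar x) = - kpar (pkd x).
Proof.
apply/ffunP => L; rewrite !ffunE scaler_sumr -sumrN; apply: eq_bigr => j jL.
rewrite ffunE -scalerAr !scalerA cardsU1 jL /= exprS -scaleNr; congr (_ *: _).
by rewrite mulN1r mulrN mulrC.
Qed.

End KoszulPolynomial.

Section Reduction.
Variables (m : nat) (k : comNzRingType) (K : {set {set 'I_m}}).
Hypothesis HK : simplicial_complex K.
Local Notation KT := (KT m k).
Local Notation red := (@red_poly m k K).
Implicit Types (x y z w : KT) (p q : {mpoly k[m]}).

Lemma red_coef p mo : (red p)@_mo = if mono_supp mo \in K then p@_mo else 0.
Proof.
rewrite /red_poly linear_sum /= big_mkcond /=.
case: (boolP (mo \in msupp p)) => h.
  rewrite (bigD1_seq mo) ?msupp_uniq //= big1 ?addr0 => [|mo' ne].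
    by case: ifP => _; rewrite ?mcoeffZ ?mcoeffX ?eqxx ?mulr1.
  by case: ifP => _ //; rewrite mcoeffZ mcoeffX (negbTE ne) mulr0.
rewrite big1_seq => [|mo' h']; first by case: ifP; rewrite // memN_msupp_eq0.
have /negbTE ne : mo' != mo by apply: contraNneq h => <-.
by case: ifP => _ //; rewrite mcoeffZ mcoeffX ne mulr0.
Qed.

Fact red_is_linear : linear red.
Proof.
move=> c p q; apply/mpolyP => mo.
by rewrite mcoeffD mcoeffZ !red_coef mcoeffD mcoeffZ; case: ifP; rewrite ?mulr0 ?addr0.
Qed.
HB.instance Definition _ :=
  GRing.isLinear.Build k {mpoly k[m]} {mpoly k[m]} _ red red_is_linear.

Lemma red_X mo : red 'X_[mo] = if mono_supp mo \in K then 'X_[mo] else 0.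
Proof.
apply/mpolyP => mo'; rewrite red_coef mcoeffX.
case: ifP => h; case: ifP => h'; rewrite ?mcoeff0 ?mcoeffX //.
all: by case: eqP => // e; move: h h'; rewrite e => -> .
Qed.

Lemma mono_suppDl (mo1 mo2 : 'X_{1..m}) : mono_supp mo1 \subset mono_supp (mo1 + mo2)%MM.
Proof. by apply/subsetP => i; rewrite !inE mnmDE; case: (mo1 i). Qed.

(* Monomials outside k[K] form an ideal because [K] is closed under subsets. *)
Lemma red_mulIdl p q : red (red p * q) = red (p * q).
Proof.
apply/mpolyP => mo; rewrite !red_coef; case: ifP => moK //.
rewrite !mcoeffM; apply: eq_bigr => mo12 /eqP e.
rewrite red_coef; case: ifP => // /negP[]; apply: (HK _ moK).
have -> : mono_supp mo = mono_supp (mo12.1 + mo12.2)%MM by rewrite -e.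
exact: mono_suppDl.
Qed.

Lemma red_mulIdr p q : red (p * red q) = red (p * q).
Proof. by rewrite mulrC red_mulIdl mulrC. Qed.

Fact kred_is_linear : linear (@kred m k K).
Proof. by move=> c x y; apply/ffunP => J; rewrite !ffunE linearP. Qed.
HB.instance Definition _ := GRing.isLinear.Build k KT KT _ (@kred m k K) kred_is_linear.

Lemma kdE x : kd K x = kred K (pkd x).
Proof. by []. Qed.

Lemma kmulE x y : kmul K x y = kred K (pkmul x y).
Proof. by []. Qed.

Lemma kred_kterm A p : kred K (kterm A p) = kterm A (red p).
Proof. by apply/ffunP => L; rewrite !ffunE; case: ifP; rewrite ?linear0. Qed.

Lemma kred_pkd x : kred K (pkd (kred K x)) = kred K (pkd x).
Proof.
apply/ffunP => L; rewrite !ffunE !linear_sum; apply: eq_bigr => j _.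
by rewrite !linearZ /= ffunE red_mulIdr.
Qed.

Lemma kred_pkmull x y : kred K (pkmul (kred K x) y) = kred K (pkmul x y).
Proof.
apply/ffunP => L; rewrite !ffunE !linear_sum; apply: eq_bigr => J1 _.
by rewrite !linear_sum; apply: eq_bigr => J2 _; rewrite !linearZ /= ffunE red_mulIdl.
Qed.

Lemma kred_pkmulr x y : kred K (pkmul x (kred K y)) = kred K (pkmul x y).
Proof.
apply/ffunP => L; rewrite !ffunE !linear_sum; apply: eq_bigr => J1 _.
by rewrite !linear_sum; apply: eq_bigr => J2 _; rewrite !linearZ /= ffunE red_mulIdr.
Qed.

Lemma kpar_kred x : kpar (kred K x) = kred K (kpar x).
Proof. by apply/ffunP => J; rewrite !ffunE linearZ. Qed.

Lemma kd_kmul x y : kd K (kmul K x y) = kmul K (kd K x) y + kmul K (kpar x) (kd K y).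
Proof. by rewrite !kdE !kmulE kred_pkd pkd_pkmul linearD kred_pkmull kred_pkmulr. Qed.

Lemma kd_kpar x : kd K (kpar x) = - kpar (kd K x).
Proof. by rewrite !kdE pkd_kpar linearN kpar_kred. Qed.

Lemma kmulDl x y z : kmul K (x + y) z = kmul K x z + kmul K y z.
Proof. by rewrite !kmulE pkmulDl linearD. Qed.

Lemma kmulNl x y : kmul K (- x) y = - kmul K x y.
Proof. by rewrite !kmulE -[pkmul _ _]/(pkmulr y (- x)) !linearN. Qed.

Lemma kmulDr x y z : kmul K x (y + z) = kmul K x y + kmul K x z.
Proof. by rewrite !kmulE linearD linearD. Qed.

Lemma kmul0l y : kmul K 0 y = 0.
Proof. by rewrite kmulE -[pkmul _ _]/(pkmulr y 0) !linear0. Qed.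

Lemma kmul0r x : kmul K x 0 = 0.
Proof. by rewrite kmulE !linear0. Qed.

(* The product of Koszul homology classes does not depend on representatives. *)
Lemma kmul_kbar_kd_cycle w z :
  kd K z = 0 -> kmul K (kbar (kd K w)) z = kd K (kmul K (kpar w) z).
Proof. by move=> cz; rewrite kd_kmul cz kmul0r addr0 kd_kpar kbarE. Qed.

Lemma kmul_cycle_kd x w :
  kd K x = 0 -> kmul K (kbar x) (kd K w) = - kd K (kmul K x w).
Proof. by move=> cx; rewrite kd_kmul cx kmul0l add0r kbarE kmulNl. Qed.

End Reduction.

Definition msq m (S : {set 'I_m}) : 'X_{1..m} := [multinom ((i \in S) : nat) | i < m].

Lemma mono_supp_msq m (S : {set 'I_m}) : mono_supp (msq S) = S.
Proof. by apply/setP => i; rewrite !inE mnmE; case: (i \in S). Qed.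

Lemma mdeg_msq m (S : {set 'I_m}) : mdeg (msq S) = #|S|.
Proof.
rewrite mdegE -sum1_card [RHS]big_mkcond /=; apply: eq_bigr => i _.
by rewrite mnmE; case: (i \in S).
Qed.

Lemma msqU m (A B : {set 'I_m}) : [disjoint A & B] -> (msq A + msq B)%MM = msq (A :|: B).
Proof.
move=> dAB; apply/mnmP => i; rewrite mnmDE !mnmE inE.
by case iA: (i \in A) => //=; rewrite (disjointFr dAB iA).
Qed.

Lemma msqD1 m (S : {set 'I_m}) i : i \in S -> (U_(i) + msq (S :\ i))%MM = msq S.
Proof.
move=> iS; apply/mnmP => j; rewrite mnmDE !mnmE !inE.
by case: (eqVneq j i) => [->|]; rewrite ?iS ?eqxx.
Qed.

Lemma mcoeffXmul_msq m (k : comNzRingType) t (S : {set 'I_m}) (p : {mpoly k[m]}) :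
  ('X_t * p)@_(msq S) = if t \in S then p@_(msq (S :\ t)) else 0.
Proof.
case: ifP => tS; first by rewrite -(msqD1 tS) mulrC mcoeffMX.
rewrite mcoeffM big1 // => mo12 /eqP e; rewrite mcoeffX; case: eqP => [h|]; rewrite ?mul0r //.
have := congr1 (fun mo : 'X_{1..m} => mo t) e.
by rewrite /= mnmDE -h mnm1E eqxx mnmE tS.
Qed.

Section KoszulCycles.
Variables (m : nat) (k : comNzRingType) (K : {set {set 'I_m}}).

Definition uv (S : {set 'I_m}) (i : 'I_m) : KT m k := kterm [set i] 'X_[msq (S :\ i)].

Lemma kd_uv (S : {set 'I_m}) i : i \in S -> S \notin K -> kd K (uv S i) = 0.
Proof.
move=> iS SK; rewrite kdE pkd_kterm big_set1 -mpolyXD msqD1 // linearZ /= kred_kterm.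
by rewrite red_X mono_supp_msq (negbTE SK) linear0 scaler0.
Qed.

Lemma kreduced_uv (S : {set 'I_m}) i : S :\ i \in K -> kreduced K (uv S i).
Proof. by move=> SiK; rewrite /kreduced kred_kterm red_X mono_supp_msq SiK. Qed.

Lemma khomog_uv (S : {set 'I_m}) i : khomog (1 + 2 * #|S :\ i|) (uv S i).
Proof.
move=> L mo; rewrite ffunE; case: eqP => [->|_]; last by rewrite msupp0.
by rewrite msuppX inE => /eqP ->; rewrite mdeg_msq cards1.
Qed.

Lemma kbar_uv (S : {set 'I_m}) i : kbar (uv S i) = uv S i.
Proof. by rewrite kbarE kpar_kterm cards1 expr1 scaleN1r opprK. Qed.

End KoszulCycles.

Lemma dsdeg_diag (deg : nat -> nat) i : dsdeg deg i i = deg i.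
Proof. by rewrite /dsdeg big_nat1 subnn subn0. Qed.

(* A product is a 2-fold Massey product, so it suffices to separate it from
   the boundaries. *)
Lemma not_golod_of_cocycle m (k : comNzRingType) (K : {set {set 'I_m}})
    (phi : {additive KT m k -> k}) (x y : KT m k) (dx dy : nat) :
  simplicial_complex K -> (forall w, phi (kd K w) = 0) ->
  (0 < dx)%N -> (0 < dy)%N -> kreduced K x -> kreduced K y ->
  khomog dx x -> khomog dy y -> kd K x = 0 -> kd K y = 0 ->
  phi (kmul K (kbar x) y) != 0 -> ~ golod k K.
Proof.
move=> HK phi_kd dx_gt0 dy_gt0 rx ry hx hy cx cy phi_xy golodK.
pose deg n := if n == 0%N then dx else dy.
pose a i j : KT m k := if (i, j) == (0, 0)%N then x else if (i, j) == (1, 1)%N then y else 0.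
have a_def : defining_system K 2%N deg a.
  by split=> [[|[|//]] _ | [|[|i]] [|[|j]] //= _ _ _]; rewrite ?dsdeg_diag.
have [b [[b_cycles _] b_homol [w [_ massey_bd]]]] := golodK 2%N deg a isT a_def.
have [y0 [_ b00]] := b_homol 0%N isT.
have [y1 [_ b11]] := b_homol 1%N isT.
have [_ cb11] := b_cycles 1%N isT.
move: massey_bd; rewrite /massey_value big_nat1 /=.
move: b00 b11; rewrite /a /= => /(canRL (subrK _)) -> /(canRL (subrK _)) b11.
rewrite addrC [kbar _]linearD /= kmulDl.
rewrite kmul_kbar_kd_cycle // b11 kmulDr kmul_cycle_kd // => /(congr1 phi).
rewrite !raddfD raddfN !phi_kd oppr0 add0r addr0 => phi_xy0.
by rewrite phi_xy0 eqxx in phi_xy.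
Qed.

Lemma sc_joinC m (K1 K2 : {set {set 'I_m}}) : sc_join K1 K2 = sc_join K2 K1.
Proof.
by apply/setP => s; apply/imset2P/imset2P => -[t1 t2 h1 h2 ->]; exists t2 t1; rewrite // setUC.
Qed.

Lemma full_sub_join_notin m (K : {set {set 'I_m}}) (I J : {set 'I_m}) :
  [disjoint I & J] -> full_sub K (I :|: J) = sc_join (bdry_simplex I) (bdry_simplex J) ->
  I \notin K.
Proof.
move=> dIJ HU; apply/negP => IK.
have : I \in full_sub K (I :|: J) by rewrite inE IK subsetUl.
rewrite HU => /imset2P [s t]; rewrite !inE => /properP [_ [x xI xs]] tJ eI.
have : x \in s :|: t by rewrite -eI.
rewrite inE (negbTE xs) /= => /(subsetP (proper_sub tJ)) xJ.
by rewrite (disjointFr dIJ xI) in xJ.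
Qed.

Section PairCocycle.
Variables (m : nat) (k : comNzRingType) (K : {set {set 'I_m}}) (I J : {set 'I_m}).
Hypothesis dIJ : [disjoint I & J].
Hypothesis HU : full_sub K (I :|: J) = sc_join (bdry_simplex I) (bdry_simplex J).
Local Notation KT := (KT m k).
Local Notation U := (I :|: J).

Lemma face_join (s t : {set 'I_m}) : s \proper I -> t \proper J -> s :|: t \in K.
Proof.
move=> sI tJ; have : s :|: t \in full_sub K U.
  by rewrite HU; apply/imset2P; exists s t; rewrite ?inE.
by rewrite inE => /andP [].
Qed.

Lemma setD_pair i j : i \in I -> j \in J -> U :\: [set i; j] = (I :\ i) :|: (J :\ j).
Proof.
move=> iI jJ; apply/setP => x; rewrite !inE.
case: (eqVneq x i) => [->|xi]; first by rewrite (disjointFr dIJ iI) /= andbF.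
by case: (eqVneq x j) => [->|xj] /=; first by rewrite (disjointFl dIJ jJ).
Qed.

Lemma setD_pair_in i j : i \in I -> j \in J -> U :\: [set i; j] \in K.
Proof. by move=> iI jJ; rewrite setD_pair // face_join // properD1. Qed.

Lemma set2_pair_eq i j i' j' : i \in I -> j \in J -> i' \in I -> j' \in J ->
  ([set i; j] == [set i'; j']) = (i == i') && (j == j').
Proof.
move=> iI jJ i'I j'J; apply/eqP/andP => [e|[/eqP -> /eqP ->] //].
have : i \in [set i'; j'] by rewrite -e set21.
rewrite !inE => /orP [/eqP ii'|/eqP ij']; last by move: j'J; rewrite -ij' (disjointFr dIJ iI).
have : j \in [set i'; j'] by rewrite -e set22.
rewrite !inE => /orP [/eqP ji'|/eqP jj']; last by rewrite ii' jj'.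
by move: jJ; rewrite ji' (disjointFr dIJ i'I).
Qed.

Definition ucoef (z : KT) (T : {set 'I_m}) : k := (z T)@_(msq (U :\: T)).

(* The monomials [u_i u_j v_(U - i - j)] correspond to the facets
   [(I - i) + (J - j)] of the sphere [bdry I * bdry J]. *)
Definition cocycleIJ (z : KT) : k :=
  \sum_(i in I) \sum_(j in J) ksgn k [set i] [set j] * ucoef z [set i; j].

Fact cocycleIJ_is_zmod_morphism : zmod_morphism cocycleIJ.
Proof.
move=> z1 z2; rewrite /cocycleIJ -sumrB; apply: eq_bigr => i _.
by rewrite -sumrB; apply: eq_bigr => j _; rewrite /ucoef !ffunE mcoeffB mulrBr.
Qed.
HB.instance Definition _ :=
  GRing.isZmodMorphism.Build KT k cocycleIJ cocycleIJ_is_zmod_morphism.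

Definition kd_contrib (w : KT) i j t :=
  ksgn k [set i] [set j] * (dsgn k [set i; j] t * ucoef w (t |: [set i; j])).

Lemma ucoef_kd_pair w i j : i \in I -> j \in J ->
  ksgn k [set i] [set j] * ucoef (kd K w) [set i; j] =
  \sum_(t in I :\ i) kd_contrib w i j t + \sum_(t in J :\ j) kd_contrib w i j t.
Proof.
move=> iI jJ; rewrite /ucoef kdE ffunE red_coef mono_supp_msq setD_pair_in // ffunE.
have dIJ' : [disjoint I :\ i & J :\ j].
  by apply: (disjointWl (subsetDl _ _)); apply: (disjointWr (subsetDl _ _)).
rewrite /kd_contrib -!mulr_sumr -mulrDr -bigU // raddf_sum; congr (_ * _).
rewrite big_mkcond [RHS]big_mkcond /=; apply: eq_bigr => t _.
have -> : (t \in [predU I :\ i & J :\ j]) = (t \in U :\: [set i; j]).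
  by rewrite (setD_pair iI jJ) [RHS]inE.
rewrite mcoeffZ mcoeffXmul_msq.
case: (boolP (t \in U :\: [set i; j])) => tU; last by case: (t \notin _); rewrite ?mulr0.
have tij : t \notin [set i; j] by move: tU; rewrite inE => /andP [].
by rewrite tij /ucoef setDDl (setUC [set i; j] [set t]).
Qed.

Lemma kd_contrib_antiI w i t j : i \in I -> t \in I -> i != t -> j \in J ->
  kd_contrib w i j t = - kd_contrib w t j i.
Proof.
move=> iI tI it jJ.
have ij : i != j by apply: contraTneq jJ => <-; rewrite (disjointFr dIJ iI).
have tj : t != j by apply: contraTneq jJ => <-; rewrite (disjointFr dIJ tI).
rewrite /kd_contrib setUCA !mulrA -mulNr; congr (_ * _).
rewrite !ksgnE !dsgnE !ninvUr ?disjoints1 ?in_set1 // -!exprD; apply: signr_eq_oddN.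
have := congr1 odd (@ninv1lr m i [set t] _); rewrite cards1 in_set1 it => /(_ isT).
by rewrite !oddD /=; odd_cases.
Qed.

Lemma kd_contrib_antiJ w i j t : i \in I -> j \in J -> t \in J -> j != t ->
  kd_contrib w i j t = - kd_contrib w i t j.
Proof.
move=> iI jJ tJ jt.
have ij : i != j by apply: contraTneq jJ => <-; rewrite (disjointFr dIJ iI).
have it : i != t by apply: contraTneq tJ => <-; rewrite (disjointFr dIJ iI).
rewrite /kd_contrib.
have -> : t |: [set i; j] = j |: [set i; t].
  by apply/setP => x; rewrite !inE; case: (x == i); case: (x == j); case: (x == t).
rewrite !mulrA -mulNr; congr (_ * _).
rewrite !ksgnE !dsgnE !ninvUr ?disjoints1 ?in_set1 // -!exprD; apply: signr_eq_oddN.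
have := congr1 odd (@ninv1lr m i [set t] _); rewrite cards1 in_set1 it => /(_ isT).
have := congr1 odd (@ninv1lr m i [set j] _); rewrite cards1 in_set1 ij => /(_ isT).
have := congr1 odd (@ninv1lr m j [set t] _); rewrite cards1 in_set1 jt => /(_ isT).
by rewrite !oddD /=; odd_cases.
Qed.

Lemma cocycleIJ_kd w : cocycleIJ (kd K w) = 0.
Proof.
rewrite /cocycleIJ; transitivity (\sum_(i in I) \sum_(j in J)
  (\sum_(t in I :\ i) kd_contrib w i j t + \sum_(t in J :\ j) kd_contrib w i j t)).
  by apply: eq_bigr => i iI; apply: eq_bigr => j jJ; rewrite ucoef_kd_pair.
under eq_bigr do rewrite big_split /=.
rewrite big_split /= exchange_big /= big1 ?add0r => [|j jJ].
  apply: big1 => i iI; apply: sum_antisym_eq0 => a b aJ bJ ab; exact: kd_contrib_antiJ.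
by apply: sum_antisym_eq0 => a b aI bI ab; apply: kd_contrib_antiI.
Qed.

Lemma cocycleIJ_uv_mul i0 j0 : i0 \in I -> j0 \in J ->
  cocycleIJ (kmul K (uv k I i0) (uv k J j0)) = 1.
Proof.
move=> i0I j0J.
have i0j0 : i0 != j0 by apply: contraTneq j0J => <-; rewrite (disjointFr dIJ i0I).
have dIJ' : [disjoint I :\ i0 & J :\ j0].
  by apply: (disjointWl (subsetDl _ _)); apply: (disjointWr (subsetDl _ _)).
rewrite kmulE pkmul_kterm disjoints1 in_set1 i0j0 linearZ /= kred_kterm -mpolyXD msqU //.
rewrite red_X mono_supp_msq face_join ?properD1 //.
rewrite /cocycleIJ (bigD1 i0) //= [X in _ + X]big1 ?addr0 => [|i /andP [iI ne]]; last first.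
  by apply: big1 => j jJ; rewrite /ucoef !ffunE set2_pair_eq // (negbTE ne) scaler0 mcoeff0 mulr0.
rewrite (bigD1 j0) //= big1 ?addr0 => [|j /andP [jJ ne]]; last first.
  by rewrite /ucoef !ffunE set2_pair_eq // eqxx (negbTE ne) scaler0 mcoeff0 mulr0.
rewrite /ucoef !ffunE eqxx mcoeffZ mcoeffX setD_pair // eqxx mulr1 ksgnE -exprD.
by rewrite (@signr_eq_odd _ _ 0) // oddD addbb.
Qed.

End PairCocycle.

Theorem lemma2p4 (m : nat) (K : {set {set 'I_m}}) (I J : {set 'I_m}) :
  simplicial_complex K ->
  I != set0 -> J != set0 -> [disjoint I & J] ->
  full_sub K (I :|: J) = sc_join (bdry_simplex I) (bdry_simplex J) ->
  forall k : comNzRingType, ~ golod k K.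
Proof.
move=> HK /set0Pn [i0 i0I] /set0Pn [j0 j0J] dIJ HU k.
have dJI : [disjoint J & I] by rewrite disjoint_sym.
have HU' : full_sub K (J :|: I) = sc_join (bdry_simplex J) (bdry_simplex I).
  by rewrite setUC sc_joinC.
have faceI : I :\ i0 \in K.
  by rewrite -(setU0 (I :\ i0)) (face_join HU) ?properD1 // proper0; apply/set0Pn; exists j0.
have faceJ : J :\ j0 \in K.
  by rewrite -(set0U (J :\ j0)) (face_join HU) ?properD1 // proper0; apply/set0Pn; exists i0.
have cI : kd K (uv k I i0) = 0 by rewrite kd_uv // (full_sub_join_notin dIJ HU).
have cJ : kd K (uv k J j0) = 0 by rewrite kd_uv // (full_sub_join_notin dJI HU').
apply: (not_golod_of_cocycle HK (cocycleIJ_kd dIJ HU) _ _ (kreduced_uv k faceI)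
  (kreduced_uv k faceJ) (@khomog_uv m k I i0) (@khomog_uv m k J j0) cI cJ) => //.
by rewrite /= kbar_uv cocycleIJ_uv_mul ?oner_neq0.
Qed.
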